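(* Let $f=h+\overline{g}$ be a sense-preserving locally univalent harmonic mapping in $\mathbb{D}$ with $f\in\mathcal{BT}$ and dilatation $w$ satisfying $\|w\|<1$. Then for all $z_1,z_2\in\mathbb{D}$, $$|f(z_1)-f(z_2)|\le\left(\frac{1+\|w\|}{1-\|w\|}\right)^{1/2}\beta_2(f)\,d_h(z_1,z_2).$$
   Context: $\mathbb{D}$ is the unit disk. A sense-preserving locally univalent harmonic mapping $f:\mathbb{D}\to\mathbb{C}$ is written $f=h+\overline{g}$ with $h,g$ analytic in $\mathbb{D}$, $h'\neq 0$ in $\mathbb{D}$; its dilatation is $w=g'/h'$, analytic with $|w|<1$ in $\mathbb{D}$, and $\|w\|=\sup_{z\in\mathbb{D}}|w(z)|$. For a smooth $F:\mathbb{D}\to\mathbb{C}$, $J_F=|F_z|^2-|F_{\bar z}|^2$ with $\partial_z=\frac12(\partial_x-i\partial_y)$, $\partial_{\bar z}=\frac12(\partial_x+i\partial_y)$ (so $J_f=|h'|^2-|g'|^2$). The Bloch-type class $\mathcal{BT}$ consists of smooth $F:\mathbb{D}\to\mathbb{C}$ with $\beta_2(F):=\sup_{z\in\mathbb{D}}(1-|z|^2)\sqrt{|J_F(z)|}<\infty$. The hyperbolic distance is $d_h(z,\xi)=\frac12\log\frac{1+p(z,\xi)}{1-p(z,\xi)}$ with $p(z,\xi)=\left|\frac{z-\xi}{1-\overline{\xi}z}\right|$. *)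

From Stdlib Require Import Reals.
From Coquelicot Require Import Coquelicot.
Open Scope R_scope.

Definition inD (z : C) : Prop := Cmod z < 1.

(* Complex differentiability of h : C -> C at every point of D
   (ex_derive over the absolute ring C, i.e. holomorphy in D). *)
Definition analytic_on_D (h : C -> C) : Prop :=
  forall z : C, inD z -> @ex_derive C_AbsRing C_NormedModule h z.

Definition cderiv (h : C -> C) (z : C) : C := C_derive h z.

Definition dilatation (h g : C -> C) (z : C) : C := Cdiv (cderiv g z) (cderiv h z).

Definition supD (phi : C -> R) : Rbar :=
  Lub_Rbar (fun r => exists z : C, inD z /\ r = phi z).

Definition dil_norm (h g : C -> C) : Rbar := supD (fun z => Cmod (dilatation h g z)).

Definition pdx (F : C -> C) (z : C) : C :=
  (Derive (fun t => fst (F (Cplus z (t, 0)))) 0,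
   Derive (fun t => snd (F (Cplus z (t, 0)))) 0).
Definition pdy (F : C -> C) (z : C) : C :=
  (Derive (fun t => fst (F (Cplus z (0, t)))) 0,
   Derive (fun t => snd (F (Cplus z (0, t)))) 0).

Definition dz (F : C -> C) (z : C) : C :=
  Cmult (RtoC (/2)) (Cminus (pdx F z) (Cmult Ci (pdy F z))).
Definition dzbar (F : C -> C) (z : C) : C :=
  Cmult (RtoC (/2)) (Cplus (pdx F z) (Cmult Ci (pdy F z))).

Definition jacobian (F : C -> C) (z : C) : R :=
  (Cmod (dz F z)) ^ 2 - (Cmod (dzbar F z)) ^ 2.

Definition beta2 (F : C -> C) : Rbar :=
  supD (fun z => (1 - (Cmod z) ^ 2) * sqrt (Rabs (jacobian F z))).

Definition in_BT (F : C -> C) : Prop := Rbar_lt (beta2 F) p_infty.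

Definition pseudo_hyp (z xi : C) : R :=
  Cmod (Cdiv (Cminus z xi) (Cminus (RtoC 1) (Cmult (Cconj xi) z))).
Definition hyp_dist (z xi : C) : R :=
  / 2 * ln ((1 + pseudo_hyp z xi) / (1 - pseudo_hyp z xi)).

From Stdlib Require Import Reals Lra Psatz.
From Coquelicot Require Import Coquelicot.
Open Scope R_scope.

(* Writing f = h + conj g, one has J_f = |h'|^2 - |g'|^2, and since |g'| <= ||w|| |h'|,
   (|h'| + |g'|)^2 = (|h'| + |g'|) / (|h'| - |g'|) J_f <= (1 + ||w||) / (1 - ||w||) J_f.
   Hence (|h'(z)| + |g'(z)|) (1 - |z|^2) <= M, where M is the constant of the theorem.
   Let phi be the disk automorphism with phi(0) = z2 and a = phi^-1(z1), so that
   |a| = p(z1, z2).  By the Schwarz-Pick identity |phi'(zeta)| (1 - |zeta|^2) = 1 - |phi(zeta)|^2,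
   the speed of f along t |-> phi(t a) is at most M |a| / (1 - t^2 |a|^2), the derivative of
   M artanh(t |a|).  Comparing Re (conj (f z1 - f z2) f(phi(t a))) with
   |f z1 - f z2| M artanh(t |a|) on [0, 1] gives |f z1 - f z2|^2 <= |f z1 - f z2| M d_h(z1, z2). *)

Lemma sum_mul_le_of_sqrt_diff_sqr_le (a b s W B : R) :
  0 <= a -> 0 <= b <= W * a -> 0 <= W < 1 -> 0 <= s ->
  s * sqrt (Rabs (a ^ 2 - b ^ 2)) <= B -> (a + b) * s <= sqrt ((1 + W) / (1 - W)) * B.
Proof.
  intros Ha Hb HW Hs HB.
  assert (Hba : b <= a) by nra.
  rewrite Rabs_pos_eq in HB by nra.
  set (Q := (1 + W) / (1 - W)). set (r := sqrt (a ^ 2 - b ^ 2)) in HB.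
  assert (HQ : 0 <= Q) by (apply Rle_mult_inv_pos; lra).
  assert (Hr : r * r = a ^ 2 - b ^ 2) by (apply sqrt_sqrt; nra).
  (* (a + b)^2 = (a + b)/(a - b) * (a^2 - b^2) and (a + b)/(a - b) <= Q as b <= W a *)
  assert (Hab : (a + b) * (a + b) <= Q * (r * r)).
  { rewrite Hr. unfold Q. apply Rmult_le_reg_r with (1 - W); [lra |].
    replace ((1 + W) / (1 - W) * (a ^ 2 - b ^ 2) * (1 - W)) with ((1 + W) * (a ^ 2 - b ^ 2)) by (field; lra).
    nra. }
  apply Rle_trans with (sqrt Q * (s * r)); [| apply Rmult_le_compat_l; [apply sqrt_pos | exact HB]].
  apply Rsqr_incr_0_var; [| apply Rmult_le_pos; [apply sqrt_pos | apply Rmult_le_pos; [lra | apply sqrt_pos]]].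
  unfold Rsqr. replace (sqrt Q * (s * r) * (sqrt Q * (s * r))) with (sqrt Q * sqrt Q * (s * s) * (r * r)) by ring.
  rewrite sqrt_sqrt by exact HQ. nra.
Qed.

Lemma increment_le_of_derive_le (p q dq : R -> R) :
  (forall t, Rabs t <= 1 -> is_derive q t (dq t)) ->
  (forall t, Rabs t <= 1 -> exists dp, is_derive p t dp /\ dp <= dq t) ->
  p 1 - p 0 <= q 1 - q 0.
Proof.
  intros Hq Hp.
  set (r := fun t => p t - q t).
  assert (Hr : forall t, Rabs (t - 0) <= 1 -> is_derive r t (Derive r t) /\ Derive r t <= 0).
  { intros t Ht. rewrite Rminus_0_r in Ht. destruct (Hp t Ht) as [dp [Hdp Hle]].
    pose proof (@is_derive_minus R_AbsRing R_NormedModule _ _ _ _ _ Hdp (Hq t Ht)) as Hdr.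
    rewrite (is_derive_unique r t _ Hdr). split; [exact Hdr |]. unfold minus, plus, opp; simpl. lra. }
  destruct (MVT_cor4 r (Derive r) 0 1 (fun c Hc => proj1 (Hr c Hc)) 1) as [c [Hc Hcb]].
  { rewrite Rminus_0_r, Rabs_R1. lra. }
  rewrite !Rminus_0_r, Rabs_R1 in Hcb.
  destruct (Hr c) as [_ Hneg]; [rewrite Rminus_0_r; exact Hcb |].
  assert (Hinc : r 1 - r 0 <= 0) by (rewrite Hc; lra).
  unfold r in Hinc. lra.
Qed.

Definition artanh (x : R) : R := / 2 * ln ((1 + x) / (1 - x)).

Lemma artanh_0 : artanh 0 = 0.
Proof. unfold artanh. replace ((1 + 0) / (1 - 0)) with 1 by field. rewrite ln_1. ring. Qed.

Lemma artanh_ge0 (x : R) : 0 <= x < 1 -> 0 <= artanh x.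
Proof.
  intros Hx. unfold artanh. apply Rmult_le_pos; [lra |].
  rewrite <- ln_1. apply ln_le; [lra |].
  apply Rmult_le_reg_r with (1 - x); [lra |]. unfold Rdiv. rewrite Rmult_assoc, Rinv_l; lra.
Qed.

Lemma is_derive_artanh_mult (rho t : R) : 0 <= rho -> Rabs t * rho < 1 ->
  is_derive (fun t => artanh (t * rho)) t (rho / (1 - (t * rho) ^ 2)).
Proof.
  intros Hr Ht. unfold artanh.
  assert (Ht' : Rabs (t * rho) < 1) by (rewrite Rabs_mult, (Rabs_pos_eq rho); auto).
  apply Rabs_def2 in Ht'. destruct Ht' as [Ht1 Ht2].
  auto_derive.
  - repeat split; try lra. apply Rdiv_lt_0_compat; lra.
  - field. repeat split; nra.
Qed.

Lemma locally_Rabs_mult_lt (k c t0 : R) : 0 <= k -> Rabs t0 * k < c ->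
  locally t0 (fun t => Rabs t * k < c).
Proof.
  intros Hk Ht0.
  assert (Hr : 0 < (c - Rabs t0 * k) / (k + 1)) by (apply Rdiv_lt_0_compat; lra).
  exists (mkposreal _ Hr). intros t Ht. change (Rabs (t - t0) < (c - Rabs t0 * k) / (k + 1)) in Ht.
  assert (Htri : Rabs t <= Rabs t0 + Rabs (t - t0)).
  { replace t with (t0 + (t - t0)) at 1 by ring. apply Rabs_triang. }
  assert (Hrk : (c - Rabs t0 * k) / (k + 1) * (k + 1) = c - Rabs t0 * k) by (field; lra).
  pose proof (Rabs_pos (t - t0)). nra.
Qed.

Lemma is_derive_C_of_quadratic_remainder (F : C -> C) (z d : C) (r k : R) :
  0 < r ->
  (forall w, Cmod (w - z) < r -> Cmod (F w - F z - (w - z) * d)%C <= k * Cmod (w - z) ^ 2) ->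
  @is_derive C_AbsRing (AbsRing_NormedModule C_AbsRing) F z d.
Proof.
  intros Hr Hrem. split; [apply is_linear_scal_l |].
  intros x Hx eps.
  apply (@is_filter_lim_locally_unique _ (AbsRing_NormedModule C_AbsRing)) in Hx; subst x.
  destruct eps as [eps Heps]; pose proof (Rabs_pos k) as Hk.
  assert (Hdel : 0 < Rmin r (eps / (Rabs k + 1)))
    by (apply Rmin_pos; [lra | apply Rdiv_lt_0_compat; lra]).
  exists (mkposreal _ Hdel). intros w Hw.
  change (Cmod (w - z)%C < Rmin r (eps / (Rabs k + 1))) in Hw.
  change (Cmod (F w - F z - (w - z) * d)%C <= eps * Cmod (w - z)%C).
  pose proof (Rmin_l r (eps / (Rabs k + 1))). pose proof (Rmin_r r (eps / (Rabs k + 1))).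
  set (e := Cmod (w - z)%C) in *.
  assert (He : 0 <= e) by apply Cmod_ge_0.
  assert (Hke : (Rabs k + 1) * e <= eps).
  { replace eps with ((Rabs k + 1) * (eps / (Rabs k + 1))) by (field; lra). nra. }
  eapply Rle_trans; [apply Hrem; change (e < r); lra |].
  change (k * e ^ 2 <= eps * e). pose proof (Rle_abs k). nra.
Qed.

Lemma is_derive_C_affine (z v zeta : C) :
  @is_derive C_AbsRing (AbsRing_NormedModule C_AbsRing) (fun w => z + w * v)%C zeta v.
Proof.
  apply (is_derive_C_of_quadratic_remainder _ _ _ 1 0); [lra |]. intros w _.
  replace (z + w * v - (z + zeta * v) - (w - zeta) * v)%C with (RtoC 0) by ring.
  rewrite Cmod_0. lra.
Qed.

Lemma is_derive_Re_mult_RtoC (F : C -> C) (t0 : R) (d u : C) :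
  @is_derive C_AbsRing C_NormedModule F (RtoC t0) d ->
  is_derive (fun s : R => Re (u * F (RtoC s))%C) t0 (Re (u * d)%C).
Proof.
  intros [_ HF]. split; [apply is_linear_scal_l |].
  intros y Hy eps.
  apply (@is_filter_lim_locally_unique R_AbsRing (AbsRing_NormedModule R_AbsRing)) in Hy; subst y.
  destruct eps as [eps Heps]; pose proof (Cmod_ge_0 u) as Hu.
  assert (Heps' : 0 < eps / (Cmod u + 1)) by (apply Rdiv_lt_0_compat; lra).
  destruct (HF (RtoC t0) (fun P HP => HP) (mkposreal _ Heps')) as [del Hdel].
  exists del. intros s Hs.
  assert (Hs' : Cmod (RtoC s - RtoC t0)%C < del) by (rewrite <- RtoC_minus, Cmod_R; exact Hs).
  specialize (Hdel (RtoC s) Hs').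
  change (Cmod (F s - F t0 - (s - t0) * d)%C <= eps / (Cmod u + 1) * Cmod (s - t0)%C) in Hdel.
  rewrite <- RtoC_minus in Hdel.
  change (Rabs (Re (u * F s)%C - Re (u * F t0)%C - (s - t0) * Re (u * d)%C) <= eps * Rabs (s - t0)).
  set (X := (F s - F t0 - (s - t0)%R * d)%C) in Hdel.
  replace (Re (u * F s)%C - Re (u * F t0)%C - (s - t0) * Re (u * d)%C) with (Re (u * X)%C)
    by (unfold X; destruct u, (F s), (F t0), d; simpl; ring).
  rewrite Cmod_R in Hdel.
  eapply Rle_trans; [apply re_le_Cmod |]. rewrite Cmod_mult.
  pose proof (Cmod_ge_0 X). pose proof (Rabs_pos (s - t0)).
  assert (Hue : Cmod u * (eps / (Cmod u + 1)) <= eps).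
  { replace eps with ((Cmod u + 1) * (eps / (Cmod u + 1))) at 2 by (field; lra). nra. }
  nra.
Qed.

Lemma Re_mult_add_conj_le (u X p q : C) :
  Re (u * (X * p))%C + Re (Cconj u * (X * q))%C <= Cmod u * Cmod X * (Cmod p + Cmod q).
Proof.
  pose proof (Rle_trans _ _ _ (Rle_abs _) (re_le_Cmod (u * (X * p))%C)).
  pose proof (Rle_trans _ _ _ (Rle_abs _) (re_le_Cmod (Cconj u * (X * q))%C)).
  rewrite !Cmod_mult, Cmod_conj in *. nra.
Qed.

Definition mobius (a w : C) : C := ((w + a) / (1 + Cconj a * w))%C.

Definition mobius_deriv (a w : C) : C :=
  ((1 - Cconj a * a) / ((1 + Cconj a * w) * (1 + Cconj a * w)))%C.

Lemma one_sub_Cconj_mul_self (a : C) : (1 - Cconj a * a)%C = RtoC (1 - Cmod a ^ 2).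
Proof.
  rewrite Cmod2_alt. destruct a as [x y].
  unfold Cminus, Cplus, Copp, Cmult, RtoC, Cconj; simpl. f_equal; ring.
Qed.

Lemma mobius_denom_lb (a w : C) : Cmod a <= 1 -> 1 - Cmod w <= Cmod (1 + Cconj a * w)%C.
Proof.
  intros Ha. pose proof (Cmod_triangle (1 + Cconj a * w) (- (Cconj a * w))) as Htri.
  replace (1 + Cconj a * w + - (Cconj a * w))%C with (RtoC 1) in Htri by ring.
  rewrite Cmod_1, Cmod_opp, Cmod_mult, Cmod_conj in Htri.
  pose proof (Cmod_ge_0 a). pose proof (Cmod_ge_0 w). nra.
Qed.

Lemma mobius_denom_neq0 (a w : C) : Cmod a <= 1 -> Cmod w < 1 -> (1 + Cconj a * w)%C <> 0.
Proof.
  intros Ha Hw E. pose proof (mobius_denom_lb a w Ha) as Hlb.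
  rewrite E, Cmod_0 in Hlb. lra.
Qed.

Lemma mobius_remainder (a zeta w : C) : Cmod a <= 1 -> Cmod zeta < 1 -> Cmod w < 1 ->
  (mobius a w - mobius a zeta - (w - zeta) * mobius_deriv a zeta)%C =
  ((w - zeta) * (w - zeta) * - (Cconj a * (1 - Cconj a * a)) /
   ((1 + Cconj a * zeta) * (1 + Cconj a * zeta) * (1 + Cconj a * w)))%C.
Proof.
  intros Ha Hzeta Hw. unfold mobius, mobius_deriv.
  field. split; apply mobius_denom_neq0; assumption.
Qed.

Lemma is_derive_mobius (a zeta : C) : Cmod a < 1 -> Cmod zeta < 1 ->
  @is_derive C_AbsRing (AbsRing_NormedModule C_AbsRing) (mobius a) zeta (mobius_deriv a zeta).
Proof.
  intros Ha Hzeta. set (m := (1 - Cmod zeta) / 2).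
  assert (Hm : 0 < m) by (unfold m; lra).
  apply (is_derive_C_of_quadratic_remainder _ _ _ m (/ (m * m * m))); [exact Hm |].
  intros w Hw. change (Cmod (w - zeta)%C < m) in Hw.
  assert (Hwm : Cmod w <= Cmod zeta + Cmod (w - zeta)%C).
  { pose proof (Cmod_triangle zeta (w - zeta)) as Htri.
    replace (zeta + (w - zeta))%C with w in Htri by ring. exact Htri. }
  assert (Hw1 : Cmod w < 1) by (unfold m in Hw; lra).
  rewrite mobius_remainder by lra.
  assert (HA : m <= Cmod (1 + Cconj a * zeta)%C)
    by (pose proof (mobius_denom_lb a zeta (Rlt_le _ _ Ha)); unfold m; lra).
  assert (HB : m <= Cmod (1 + Cconj a * w)%C)
    by (pose proof (mobius_denom_lb a w (Rlt_le _ _ Ha)); unfold m in *; lra).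
  assert (Hnum : Cmod (- (Cconj a * (1 - Cconj a * a)))%C <= 1).
  { rewrite Cmod_opp, Cmod_mult, Cmod_conj, one_sub_Cconj_mul_self, Cmod_R, Rabs_pos_eq;
      pose proof (Cmod_ge_0 a); nra. }
  rewrite Cmod_div, !Cmod_mult.
  2: { apply Cmod_gt_0. rewrite !Cmod_mult. apply Rmult_lt_0_compat; [apply Rmult_lt_0_compat |]; lra. }
  set (e := Cmod (w - zeta)%C). assert (He : 0 <= e) by apply Cmod_ge_0.
  apply Rle_trans with (e * e * 1 / (m * m * m)).
  { unfold Rdiv. apply Rmult_le_compat.
    - apply Rmult_le_pos; [nra | apply Cmod_ge_0].
    - apply Rlt_le, Rinv_0_lt_compat. apply Rmult_lt_0_compat; [apply Rmult_lt_0_compat |]; lra.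
    - apply Rmult_le_compat_l; nra.
    - apply Rinv_le_contravar; [apply Rmult_lt_0_compat; [apply Rmult_lt_0_compat |]; lra |].
      apply Rmult_le_compat; nra. }
  right. field. lra.
Qed.

Lemma Cmod_sqr_mobius_denom_sub_num (a w : C) :
  Cmod (1 + Cconj a * w)%C ^ 2 - Cmod (w + a)%C ^ 2 = (1 - Cmod a ^ 2) * (1 - Cmod w ^ 2).
Proof. rewrite !Cmod2_alt. destruct a, w. simpl. ring. Qed.

Lemma one_sub_Cmod_mobius (a w : C) : Cmod a < 1 -> Cmod w < 1 ->
  1 - Cmod (mobius a w) ^ 2 = (1 - Cmod a ^ 2) * (1 - Cmod w ^ 2) / Cmod (1 + Cconj a * w)%C ^ 2.
Proof.
  intros Ha Hw. pose proof (mobius_denom_neq0 a w (Rlt_le _ _ Ha) Hw) as HD.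
  apply Cmod_gt_0 in HD.
  unfold mobius. rewrite Cmod_div by (apply Cmod_gt_0; lra).
  rewrite <- Cmod_sqr_mobius_denom_sub_num. field. lra.
Qed.

Lemma Cmod_mobius_lt1 (a w : C) : Cmod a < 1 -> Cmod w < 1 -> Cmod (mobius a w) < 1.
Proof.
  intros Ha Hw. pose proof (one_sub_Cmod_mobius a w Ha Hw) as E.
  pose proof (mobius_denom_neq0 a w (Rlt_le _ _ Ha) Hw) as HD. apply Cmod_gt_0 in HD.
  assert (0 < 1 - Cmod (mobius a w) ^ 2).
  { rewrite E. pose proof (Cmod_ge_0 a). pose proof (Cmod_ge_0 w).
    apply Rdiv_lt_0_compat; [apply Rmult_lt_0_compat |]; nra. }
  pose proof (Cmod_ge_0 (mobius a w)). nra.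
Qed.

Lemma Cmod_mobius_deriv (a w : C) : Cmod a < 1 -> Cmod w < 1 ->
  Cmod (mobius_deriv a w) * (1 - Cmod w ^ 2) = 1 - Cmod (mobius a w) ^ 2.
Proof.
  intros Ha Hw. pose proof (mobius_denom_neq0 a w (Rlt_le _ _ Ha) Hw) as HD.
  apply Cmod_gt_0 in HD.
  rewrite one_sub_Cmod_mobius by assumption. unfold mobius_deriv.
  rewrite Cmod_div, Cmod_mult, one_sub_Cconj_mul_self, Cmod_R, Rabs_pos_eq.
  - field. lra.
  - pose proof (Cmod_ge_0 a). nra.
  - apply Cmod_gt_0. rewrite Cmod_mult. nra.
Qed.

Lemma mobius_0 (a : C) : mobius a 0 = a.
Proof.
  unfold mobius. replace (1 + Cconj a * 0)%C with (RtoC 1) by ring.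
  field.
Qed.

Lemma mobius_opp_inv (a w : C) : Cmod a < 1 -> Cmod w < 1 -> mobius a (mobius (- a) w) = w.
Proof.
  intros Ha Hw.
  assert (HD : (1 + Cconj (- a) * w)%C <> 0) by (apply mobius_denom_neq0; [rewrite Cmod_opp|]; lra).
  assert (HA : (1 - Cconj a * a)%C <> 0).
  { rewrite one_sub_Cconj_mul_self. apply Cmod_gt_0. rewrite Cmod_R, Rabs_pos_eq;
      pose proof (Cmod_ge_0 a); nra. }
  unfold mobius. rewrite Copp_conj in HD |- *.
  field. split; [exact HD |].
  intro E. apply HA. rewrite <- E. ring.
Qed.

Lemma pseudo_hyp_mobius (z xi : C) : pseudo_hyp z xi = Cmod (mobius (- xi) z).
Proof.
  unfold pseudo_hyp, mobius. rewrite Copp_conj. f_equal. f_equal; ring.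
Qed.

Section HarmonicMapping.

Variables f h g : C -> C.
Hypothesis Hh : analytic_on_D h.
Hypothesis Hg : analytic_on_D g.
Hypothesis Hf : forall z, inD z -> f z = Cplus (h z) (Cconj (g z)).

Lemma is_derive_harmonic_path (P : C -> C) (t0 : R) (dP u : C) :
  @is_derive C_AbsRing (AbsRing_NormedModule C_AbsRing) P (RtoC t0) dP ->
  locally t0 (fun t => inD (P (RtoC t))) ->
  is_derive (fun t => Re (u * f (P (RtoC t)))%C) t0
    (Re (u * (dP * cderiv h (P t0)))%C + Re (Cconj u * (dP * cderiv g (P t0)))%C).
Proof.
  intros HP Hin.
  pose proof (locally_singleton _ _ Hin) as Hin0.
  assert (Hcomp : forall (k : C -> C) (v : C), analytic_on_D k ->
    is_derive (fun t => Re (v * k (P (RtoC t)))%C) t0 (Re (v * (dP * cderiv k (P t0)))%C)).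
  { intros k v Hk. apply (is_derive_Re_mult_RtoC (fun w => k (P w))).
    exact (@is_derive_comp C_AbsRing C_NormedModule k P _ _ _
      (C_derive_correct k _ 0 (Hk _ Hin0)) HP). }
  eapply is_derive_ext_loc;
    [| exact (@is_derive_plus R_AbsRing R_NormedModule _ _ _ _ _ (Hcomp h u Hh) (Hcomp g (Cconj u) Hg))].
  refine (filter_imp _ _ _ Hin). intros t Ht. cbn beta.
  rewrite (Hf _ Ht). destruct u, (h (P (RtoC t))), (g (P (RtoC t))). unfold plus; simpl. ring.
Qed.

Lemma Derive_harmonic_line (z v u : C) : inD z ->
  Derive (fun t => Re (u * f (z + RtoC t * v))%C) 0 =
  Re (u * (v * cderiv h z))%C + Re (Cconj u * (v * cderiv g z))%C.
Proof.
  intros Hz. apply is_derive_unique. unfold inD in Hz.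
  assert (Hin : locally 0 (fun t => inD (z + RtoC t * v)%C)).
  { refine (filter_imp _ _ _ (locally_Rabs_mult_lt (Cmod v) (1 - Cmod z) 0 (Cmod_ge_0 v) _)).
    - intros t Ht. unfold inD. eapply Rle_lt_trans; [apply Cmod_triangle |].
      rewrite Cmod_mult, Cmod_R. lra.
    - rewrite Rabs_R0. lra. }
  pose proof (is_derive_harmonic_path (fun w => z + w * v)%C 0 v u (is_derive_C_affine z v 0) Hin) as H.
  cbv beta in H. replace (z + RtoC 0 * v)%C with z in H by ring. exact H.
Qed.

Lemma partial_derivative_harmonic (z v : C) : inD z ->
  (Derive (fun t => fst (f (z + RtoC t * v)%C)) 0, Derive (fun t => snd (f (z + RtoC t * v)%C)) 0) =
  (v * cderiv h z + Cconj (v * cderiv g z))%C.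
Proof.
  intros Hz.
  rewrite (Derive_ext _ (fun t => Re (1 * f (z + RtoC t * v))%C))
    by (intros t; destruct (f _); simpl; ring).
  rewrite (Derive_ext (fun t => snd _) (fun t => Re ((0, -1) * f (z + RtoC t * v))%C))
    by (intros t; destruct (f _); simpl; ring).
  rewrite !Derive_harmonic_line by exact Hz.
  destruct v, (cderiv h z), (cderiv g z). unfold Cconj, Cplus, Cmult; simpl. f_equal; ring.
Qed.

Lemma pdx_harmonic (z : C) : inD z -> pdx f z = (cderiv h z + Cconj (cderiv g z))%C.
Proof.
  intros Hz. unfold pdx.
  replace (cderiv h z + Cconj (cderiv g z))%C with (1 * cderiv h z + Cconj (1 * cderiv g z))%C by
    (rewrite !Cmult_1_l; reflexivity).
  rewrite <- (partial_derivative_harmonic z 1 Hz).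
  f_equal; apply Derive_ext; intros t; do 3 f_equal; unfold Cmult, RtoC; simpl; f_equal; ring.
Qed.

Lemma pdy_harmonic (z : C) : inD z -> pdy f z = (Ci * cderiv h z + Cconj (Ci * cderiv g z))%C.
Proof.
  intros Hz. unfold pdy. rewrite <- (partial_derivative_harmonic z Ci Hz).
  f_equal; apply Derive_ext; intros t; do 3 f_equal; unfold Cmult, RtoC, Ci; simpl; f_equal; ring.
Qed.

Lemma dz_harmonic (z : C) : inD z -> dz f z = cderiv h z.
Proof.
  intros Hz. unfold dz. rewrite pdx_harmonic, pdy_harmonic by exact Hz.
  destruct (cderiv h z), (cderiv g z). unfold Cconj, Cplus, Cminus, Copp, Cmult, Ci, RtoC; simpl.
  f_equal; field.
Qed.

Lemma dzbar_harmonic (z : C) : inD z -> dzbar f z = Cconj (cderiv g z).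
Proof.
  intros Hz. unfold dzbar. rewrite pdx_harmonic, pdy_harmonic by exact Hz.
  destruct (cderiv h z), (cderiv g z). unfold Cconj, Cplus, Cminus, Copp, Cmult, Ci, RtoC; simpl.
  f_equal; field.
Qed.

Lemma jacobian_harmonic (z : C) : inD z ->
  jacobian f z = Cmod (cderiv h z) ^ 2 - Cmod (cderiv g z) ^ 2.
Proof.
  intros Hz. unfold jacobian. rewrite dz_harmonic, dzbar_harmonic, Cmod_conj by exact Hz.
  reflexivity.
Qed.

Lemma harmonic_derivative_sum_bound (W B : R) (z : C) :
  inD z -> cderiv h z <> 0 -> 0 <= W < 1 -> Cmod (dilatation h g z) <= W ->
  (1 - Cmod z ^ 2) * sqrt (Rabs (jacobian f z)) <= B ->
  (Cmod (cderiv h z) + Cmod (cderiv g z)) * (1 - Cmod z ^ 2) <= sqrt ((1 + W) / (1 - W)) * B.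
Proof.
  intros Hz Hh0 HW Hw HB.
  rewrite (jacobian_harmonic z Hz) in HB.
  apply Cmod_gt_0 in Hh0.
  unfold dilatation in Hw. rewrite Cmod_div in Hw by (apply Cmod_gt_0; exact Hh0).
  apply sum_mul_le_of_sqrt_diff_sqr_le; try assumption.
  - apply Cmod_ge_0.
  - split; [apply Cmod_ge_0 |].
    apply (Rmult_le_compat_r (Cmod (cderiv h z))) in Hw; [| lra].
    unfold Rdiv in Hw. rewrite Rmult_assoc, Rinv_l, Rmult_1_r in Hw by lra. exact Hw.
  - unfold inD in Hz. pose proof (Cmod_ge_0 z). nra.
Qed.

Lemma derive_harmonic_mobius_path_le (M : R)
  (Hpt : forall z, inD z -> (Cmod (cderiv h z) + Cmod (cderiv g z)) * (1 - Cmod z ^ 2) <= M)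
  (z2 a u : C) (t0 : R) :
  Cmod z2 < 1 -> Rabs t0 * Cmod a < 1 ->
  exists D, is_derive (fun t => Re (u * f (mobius z2 (RtoC t * a)))%C) t0 D /\
    D <= Cmod u * M * (Cmod a / (1 - (t0 * Cmod a) ^ 2)).
Proof.
  intros Hz2 Ht0.
  assert (Hcz : forall t : R, Cmod (RtoC t * a)%C = Rabs t * Cmod a)
    by (intros t; rewrite Cmod_mult, Cmod_R; reflexivity).
  set (zeta := (RtoC t0 * a)%C).
  assert (Hzeta : Cmod zeta < 1) by (unfold zeta; rewrite Hcz; exact Ht0).
  assert (Hline : @is_derive C_AbsRing (AbsRing_NormedModule C_AbsRing) (fun w => w * a)%C (RtoC t0) a)
    by (apply (@is_derive_ext C_AbsRing (AbsRing_NormedModule C_AbsRing) (fun w => 0 + w * a)%C);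
        [intros w; apply Cplus_0_l | apply is_derive_C_affine]).
  pose proof (@is_derive_comp C_AbsRing (AbsRing_NormedModule C_AbsRing) (mobius z2) (fun w => w * a)%C
    (RtoC t0) _ _ (is_derive_mobius z2 zeta Hz2 Hzeta) Hline) as Hpath.
  assert (Hin : locally t0 (fun t => inD (mobius z2 (RtoC t * a)))).
  { refine (filter_imp _ _ _ (locally_Rabs_mult_lt (Cmod a) 1 t0 (Cmod_ge_0 a) Ht0)).
    intros t Ht. apply Cmod_mobius_lt1; [exact Hz2 | rewrite Hcz; exact Ht]. }
  pose proof (is_derive_harmonic_path (fun w => mobius z2 (w * a))%C t0 _ u Hpath Hin) as Hder.
  cbv beta in Hder. eexists. split; [exact Hder |]. fold zeta.
  set (w := mobius z2 zeta).
  assert (Hw : inD w) by (apply Cmod_mobius_lt1; assumption).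
  set (S := Cmod (cderiv h w) + Cmod (cderiv g w)).
  set (q := 1 - Cmod zeta ^ 2).
  assert (Hq : 0 < q) by (unfold q; pose proof (Cmod_ge_0 zeta); nra).
  assert (Hzq : (t0 * Cmod a) ^ 2 = Cmod zeta ^ 2)
    by (unfold zeta; rewrite Hcz, !Rpow_mult_distr, pow2_abs; reflexivity).
  assert (HmS : Cmod (mobius_deriv z2 zeta) * S <= M / q).
  { apply Rmult_le_reg_r with q; [exact Hq |].
    replace (M / q * q) with M by (field; lra).
    replace (Cmod (mobius_deriv z2 zeta) * S * q) with (S * (Cmod (mobius_deriv z2 zeta) * q)) by ring.
    unfold q. rewrite Cmod_mobius_deriv by assumption. apply Hpt, Hw. }
  eapply Rle_trans; [apply Re_mult_add_conj_le |].
  change (scal a (mobius_deriv z2 zeta)) with (a * mobius_deriv z2 zeta)%C.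
  rewrite Cmod_mult, Hzq. fold q. fold S.
  replace (Cmod u * M * (Cmod a / q)) with (Cmod u * Cmod a * (M / q)) by (field; lra).
  replace (Cmod u * (Cmod a * Cmod (mobius_deriv z2 zeta)) * S)
    with (Cmod u * Cmod a * (Cmod (mobius_deriv z2 zeta) * S)) by ring.
  apply Rmult_le_compat_l; [apply Rmult_le_pos; apply Cmod_ge_0 | exact HmS].
Qed.

Lemma harmonic_Lipschitz_hyp_dist (M : R)
  (Hpt : forall z, inD z -> (Cmod (cderiv h z) + Cmod (cderiv g z)) * (1 - Cmod z ^ 2) <= M)
  (z1 z2 : C) : inD z1 -> inD z2 -> Cmod (f z1 - f z2)%C <= M * hyp_dist z1 z2.
Proof.
  intros Hz1 Hz2.
  set (a := mobius (- z2) z1). set (rho := Cmod a). set (d := (f z1 - f z2)%C).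
  assert (Ha : rho < 1) by (apply Cmod_mobius_lt1; [rewrite Cmod_opp |]; assumption).
  assert (Hrho : 0 <= rho) by apply Cmod_ge_0.
  assert (HM : 0 <= M).
  { assert (H0 : inD 0) by (unfold inD; rewrite Cmod_0; lra).
    eapply Rle_trans; [| apply (Hpt 0 H0)].
    apply Rmult_le_pos; [pose proof (Cmod_ge_0 (cderiv h 0)); pose proof (Cmod_ge_0 (cderiv g 0)); lra |].
    rewrite Cmod_0. lra. }
  assert (Hinc : Re (Cconj d * f (mobius z2 (RtoC 1 * a)))%C - Re (Cconj d * f (mobius z2 (RtoC 0 * a)))%C
                 <= Cmod (Cconj d) * M * artanh (1 * rho) - Cmod (Cconj d) * M * artanh (0 * rho)).
  { apply (increment_le_of_derive_le (fun t => Re (Cconj d * f (mobius z2 (RtoC t * a)))%C)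
      (fun t => Cmod (Cconj d) * M * artanh (t * rho))
      (fun t => Cmod (Cconj d) * M * (rho / (1 - (t * rho) ^ 2)))).
    - intros t Ht. apply (is_derive_scal (fun t => artanh (t * rho))).
      apply is_derive_artanh_mult; [exact Hrho | nra].
    - intros t Ht. apply (derive_harmonic_mobius_path_le M Hpt); [exact Hz2 | fold rho; nra]. }
  rewrite Cmult_1_l, Cmult_0_l, mobius_0, Rmult_1_l, Rmult_0_l, artanh_0 in Hinc.
  unfold a in Hinc. rewrite mobius_opp_inv in Hinc by assumption.
  replace (Re (Cconj d * f z1)%C - Re (Cconj d * f z2)%C) with (Cmod d ^ 2) in Hinc
    by (rewrite Cmod2_alt; unfold d; destruct (f z1), (f z2); simpl; ring).
  rewrite Cmod_conj, Rmult_0_r, Rminus_0_r in Hinc.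
  change (Cmod d <= M * artanh (pseudo_hyp z1 z2)). rewrite pseudo_hyp_mobius. fold a rho.
  pose proof (Rmult_le_pos _ _ HM (artanh_ge0 rho (conj Hrho Ha))) as Hbound.
  pose proof (Cmod_ge_0 d). fold d. nra.
Qed.

End HarmonicMapping.

Lemma supD_finite_ub (phi : C -> R) : supD phi <> p_infty ->
  supD phi = Finite (real (supD phi)) /\ forall z, inD z -> phi z <= real (supD phi).
Proof.
  intros Hfin. destruct (Lub_Rbar_correct (fun r => exists z : C, inD z /\ r = phi z)) as [Hub _].
  fold (supD phi) in Hub.
  assert (H0 : inD 0) by (unfold inD; rewrite Cmod_0; lra).
  pose proof (Hub (phi 0) (ex_intro _ (RtoC 0) (conj H0 eq_refl))) as Hphi0.
  destruct (supD phi) as [s | |]; [| congruence | contradiction].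
  split; [reflexivity |]. intros z Hz. apply (Hub (phi z)). exists z. split; [exact Hz | reflexivity].
Qed.

Theorem mainTheorem10 (f h g : C -> C)
  (Hh : analytic_on_D h) (Hg : analytic_on_D g)
  (Hf : forall z : C, inD z -> f z = Cplus (h z) (Cconj (g z)))
  (Hloc : forall z : C, inD z -> cderiv h z <> RtoC 0)
  (Hsp : forall z : C, inD z -> Cmod (cderiv g z) < Cmod (cderiv h z))
  (HBT : in_BT f)
  (Hw : Rbar_lt (dil_norm h g) 1) :
  forall z1 z2 : C, inD z1 -> inD z2 ->
    Cmod (Cminus (f z1) (f z2)) <=
      sqrt ((1 + real (dil_norm h g)) / (1 - real (dil_norm h g)))
      * real (beta2 f) * hyp_dist z1 z2.
Proof.
  intros z1 z2 Hz1 Hz2.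
  destruct (supD_finite_ub (fun z => Cmod (dilatation h g z))) as [HWfin HWub].
  { intros E. change (dil_norm h g = p_infty) in E. rewrite E in Hw. exact Hw. }
  destruct (supD_finite_ub (fun z => (1 - Cmod z ^ 2) * sqrt (Rabs (jacobian f z)))) as [_ HBub].
  { intros E. change (beta2 f = p_infty) in E. unfold in_BT in HBT. rewrite E in HBT. exact HBT. }
  fold (dil_norm h g) in HWfin, HWub. fold (beta2 f) in HBub.
  assert (HW : 0 <= real (dil_norm h g) < 1).
  { split; [| rewrite HWfin in Hw; exact Hw].
    eapply Rle_trans; [apply Cmod_ge_0 | apply (HWub 0); unfold inD; rewrite Cmod_0; lra]. }
  apply (harmonic_Lipschitz_hyp_dist f h g Hh Hg Hf); [| exact Hz1 | exact Hz2].
  intros z Hz.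
  apply (harmonic_derivative_sum_bound f h g Hh Hg Hf); auto.
Qed.
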